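(* Let $\mathcal{M}=(E,\rho)$ be a $q$-matroid. (a) If $F$ is a flat, then $\mathrm{cyc}(F)$ is a flat. (b) If $F$ is open (cyclic), then $\mathrm{cl}(F)$ is open. As a consequence, every subspace $V\le E$ satisfies $\mathrm{cl}(\mathrm{cyc}(V))\le\mathrm{cyc}(\mathrm{cl}(V))$, and both of these spaces are cyclic flats.
   Context: Let $\mathbb{F}=\mathbb{F}_q$. A $q$-matroid is $\mathcal{M}=(E,\rho)$, $E$ a finite-dimensional $\mathbb{F}$-vector space, $\rho$ from subspaces to $\mathbb{Z}_{\ge0}$ with $0\le\rho(V)\le\dim V$, monotone and submodular. Flat: $\rho(F+\langle x\rangle)>\rho(F)$ for all $x\notin F$. Closure: $\mathrm{cl}(V)=\sum\{\langle x\rangle:\rho(V+\langle x\rangle)=\rho(V)\}$. Independent: $\rho(V)=\dim V$; circuit: dependent subspace with all proper subspaces independent; open: sum of circuits (empty sum $=0$). Cyclic core: $\mathrm{cyc}(V)=\{x\in V\mid\rho(W)=\rho(V)\text{ for all }W\le V\text{ with }W+\langle x\rangle=V\}$; $V$ is cyclic if $\mathrm{cyc}(V)=V$, which is equivalent to $V$ being open. A cyclic flat is a subspace that is both a flat and cyclic. *)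

From HB Require Import structures.
From mathcomp Require Import all_boot all_order all_algebra all_fingroup all_field.
From Stdlib Require Import ClassicalEpsilon.

Set Implicit Arguments.
Unset Strict Implicit.
Unset Printing Implicit Defensive.

Import GRing.Theory.
Local Open Scope ring_scope.
Local Open Scope vspace_scope.

Section QMatroid.
Variables (F : finFieldType) (E : vectType F).

Definition qmatroid (rho : {vspace E} -> nat) : Prop :=
  [/\ (forall V, (rho V <= \dim V)%N),
      (forall U V : {vspace E}, (U <= V)%VS -> (rho U <= rho V)%N)
    & (forall U V : {vspace E},
         (rho (U + V)%VS + rho (U :&: V)%VS <= rho U + rho V)%N)].

Variable rho : {vspace E} -> nat.

Definition flat (X : {vspace E}) : Prop :=
  forall x : E, x \notin X -> (rho X < rho (X + <[x]>)%VS)%N.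

(* cl(V) = sum of <x> over all x with rho(V + <x>) = rho(V);
   E is finite, enumerated through finvect_type E. *)
Definition cl (V : {vspace E}) : {vspace E} :=
  (\sum_(x : finvect_type E | rho (V + <[x : E]>)%VS == rho V) <[x : E]>)%VS.

Definition in_cyc (V : {vspace E}) (x : E) : Prop :=
  x \in V /\
  forall W : {vspace E}, (W <= V)%VS -> (W + <[x]>)%VS = V -> rho W = rho V.

Definition in_cycb (V : {vspace E}) (x : E) : bool :=
  if excluded_middle_informative (in_cyc V x) then true else false.

(* cyc(V) as a subspace: the span of the set {x in V | ...}, i.e. the sum of
   the lines <x> for x in that set (the set is itself a subspace). *)
Definition cyc (V : {vspace E}) : {vspace E} :=
  (\sum_(x : finvect_type E | in_cycb V (x : E)) <[x : E]>)%VS.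

Definition cyclic (V : {vspace E}) : Prop := cyc V = V.

Definition cyclic_flat (V : {vspace E}) : Prop := flat V /\ cyclic V.

(* Independent / circuit / open, for reference (open <-> cyclic, as stated in
   the paper's context). *)
Definition indep (V : {vspace E}) : Prop := rho V = \dim V.
Definition circuit (C : {vspace E}) : Prop :=
  ~ indep C /\ forall D : {vspace E}, (D <= C)%VS -> D != C -> indep D.

Definition open_space (V : {vspace E}) : Prop :=
  exists Cs : seq {vspace E},
    (forall C, C \in Cs -> circuit C) /\ V = (\sum_(C <- Cs) C)%VS.

End QMatroid.

From HB Require Import structures.
From mathcomp Require Import all_boot all_order all_algebra all_fingroup all_field.
From mathcomp Require Import zify.
From Stdlib Require Import Classical ClassicalEpsilon.

(* If x lies in F but not in cyc F, some hyperplane W of F with W + <x> = F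
   has smaller rank.  Such a W has the same cyclic core as F, so cyc F <= W,
   and submodularity carries the rank jump from W to W + <x> = F down to
   cyc F + <x>.  Enlarging V to a subspace of the same rank, such as cl V, only
   enlarges its cyclic core; hence cl (cyc V) <= cyc (cl V) by minimality of
   the closure among flats, and for cyclic V this makes cl V cyclic.  Peeling
   off rank-dropping hyperplanes shows that each dimension of V outside cyc V
   costs one unit of rank, which makes cyc idempotent. *)

Set Implicit Arguments.
Unset Strict Implicit.
Unset Printing Implicit Defensive.

Import GRing.Theory.

Local Open Scope ring_scope.
Local Open Scope vspace_scope.

Section SubspaceLattice.
Variables (K : fieldType) (vT : vectType K).
Implicit Types (A B U V X : {vspace vT}) (x y : vT).

Lemma addv_capv_modular A B X : (A <= X)%VS -> (A + B) :&: X = A + B :&: X.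
Proof.
move=> AX; apply/eqP; rewrite eqEsubv; apply/andP; split; last first.
  by rewrite subv_cap addvS ?capvSl // subv_add AX capvSr.
apply/subvP => z /memv_capP[/memv_addP[a aA [b bB ->]] abX].
have aX : a \in X := subvP AX a aA.
by rewrite memv_add // memv_cap bB -[b](addKr a) memvD ?memvN.
Qed.

Lemma dim_addv_line U x : (\dim (U + <[x]>) <= (\dim U).+1)%N.
Proof.
have [le _] := dimv_add_leqif U <[x]>.
by rewrite dim_vline in le; apply: leq_trans le _; rewrite -addn1 leq_add2l leq_b1.
Qed.

Lemma addv_line_eq U V y : (U <= V)%VS -> (\dim V <= (\dim U).+1)%N ->
  y \in V -> y \notin U -> U + <[y]> = V.
Proof.
move=> UV dimV yV yNU; apply/eqP; rewrite eqEdim subv_add UV -memvE yV /=.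
apply: leq_trans dimV _.
rewrite (ltn_leqif (dimv_leqif_eq (addvSl U <[y]>))).
by apply: contra yNU => /eqP ->; rewrite memvE addvSr.
Qed.

Lemma capv_addv_line U V X y : U + <[y]> = V -> (X <= V)%VS -> y \in X ->
  U :&: X + <[y]> = X.
Proof.
move=> UyV XV yX; rewrite addvC -addv_capv_modular -?memvE //.
by rewrite addvC UyV; apply/capv_idPr.
Qed.

End SubspaceLattice.

Section QMatroidTheory.
Variables (F : finFieldType) (E : vectType F) (rho : {vspace E} -> nat).
Hypothesis rhoM : qmatroid rho.
Implicit Types (A B C D U V W X Y : {vspace E}) (x y : E).

Local Notation cl := (cl rho).
Local Notation cyc := (cyc rho).
Local Notation in_cyc := (in_cyc rho).
Local Notation flat := (flat rho).

Lemma rho_leq_dim V : (rho V <= \dim V)%N.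
Proof. by case: rhoM. Qed.

Lemma rhoS U V : (U <= V)%VS -> (rho U <= rho V)%N.
Proof. by case: rhoM => _ + _; apply. Qed.

Lemma rho_submod U V : (rho (U + V) + rho (U :&: V) <= rho U + rho V)%N.
Proof. by case: rhoM. Qed.

Lemma rho_addv_dim U V : (rho (U + V) <= rho U + \dim V)%N.
Proof. by have := rho_submod U V; have := rho_leq_dim V; lia. Qed.

Lemma rho_addv_line U x : (rho (U + <[x]>) <= (rho U).+1)%N.
Proof.
apply: leq_trans (rho_addv_dim U <[x]>) _.
by rewrite dim_vline -addn1 leq_add2l leq_b1.
Qed.

Lemma rho_addv_line_submod C A x : (C <= A)%VS ->
  (rho (A + <[x]>) + rho C <= rho A + rho (C + <[x]>))%N.
Proof.
move=> CA; have := rho_submod A (C + <[x]>).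
rewrite addvA (addv_idPl CA).
have : (rho C <= rho (A :&: (C + <[x]>)))%N by rewrite rhoS // subv_cap CA addvSl.
lia.
Qed.

Lemma rho_addv_eq V S1 S2 : rho (V + S1) = rho V -> rho (V + S2) = rho V ->
  rho (V + (S1 + S2)) = rho V.
Proof.
move=> eq1 eq2; have := rhoS (addvSl V (S1 + S2)).
have := rho_submod (V + S1) (V + S2); rewrite eq1 eq2.
have : (rho V <= rho ((V + S1) :&: (V + S2)))%N by rewrite rhoS // subv_cap !addvSl.
have : (rho (V + (S1 + S2)) <= rho ((V + S1) + (V + S2)))%N.
  by rewrite rhoS // addvA addvS ?addvSl ?addvSr.
lia.
Qed.

Lemma cl_line_subv V x : rho (V + <[x]>) = rho V -> (<[x]> <= cl V)%VS.
Proof. by move=> eqVx; apply: (sumv_sup (x : finvect_type E)) => //=; apply/eqP. Qed.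

Lemma subv_cl V : (V <= cl V)%VS.
Proof. by apply/subvP => x xV; rewrite memvE cl_line_subv // (addv_idPl _). Qed.

Lemma rho_cl V : rho (cl V) = rho V.
Proof.
rewrite -{1}(addv_idPr (subv_cl V)).
by apply: (big_ind (fun S => rho (V + S) = rho V)) => [|S1 S2|x /eqP];
  rewrite ?addv0 //; apply: rho_addv_eq.
Qed.

Lemma cl_flat V : flat (cl V).
Proof.
move=> x xNcl; rewrite ltnNge; apply: contra xNcl => le.
rewrite memvE cl_line_subv //; have := rhoS (addvSl V <[x]>).
have : (rho (V + <[x]>) <= rho (cl V + <[x]>))%N by rewrite rhoS ?addvS ?subv_cl.
by rewrite rho_cl in le; lia.
Qed.

Lemma cl_subv_flat X D : (X <= D)%VS -> flat D -> (cl X <= D)%VS.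
Proof.
move=> XD flatD; apply/subv_sumP => x /eqP eqXx; rewrite -memvE.
by apply: contraT => xND; have := flatD x xND; have := rho_addv_line_submod x XD; lia.
Qed.

Lemma in_cycP V x : reflect (in_cyc V x) (in_cycb rho V x).
Proof. by rewrite /in_cycb; case: excluded_middle_informative; constructor. Qed.

Lemma mem_cyc V y : in_cyc V y -> y \in cyc V.
Proof. by move=> cycy; rewrite memvE (sumv_sup (y : finvect_type E)) //; apply/in_cycP. Qed.

Lemma cyc_least V B : (forall y, in_cyc V y -> y \in B) -> (cyc V <= B)%VS.
Proof. by move=> sub; apply/subv_sumP => y /in_cycP /sub; rewrite memvE. Qed.

Lemma cyc_subv V : (cyc V <= V)%VS.
Proof. by apply: cyc_least => y []. Qed.

Lemma hyperplane_of_notin_cyc V x : x \in V -> ~ in_cyc V x ->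
  exists W, [/\ (W <= V)%VS, W + <[x]> = V & (rho W < rho V)%N].
Proof.
move=> xV xNcyc; apply: NNPP => noW; apply: xNcyc; split=> // W WV WxV.
apply/eqP; rewrite eqn_leq rhoS //= leqNgt; apply/negP => ltWV.
by apply: noW; exists W.
Qed.

Section RankDroppingHyperplane.
Variables (W V : {vspace E}) (x : E).
Hypotheses (WV : (W <= V)%VS) (WxV : W + <[x]> = V) (ltWV : (rho W < rho V)%N).

Lemma in_cyc_hyperplane_mem y : in_cyc V y -> y \in W.
Proof.
case=> yV cycy; apply: contraT => yNW.
have dimV : (\dim V <= (\dim W).+1)%N by rewrite -WxV dim_addv_line.
by have := cycy W WV (addv_line_eq WV dimV yV yNW); lia.
Qed.

Lemma in_cyc_hyperplane y : in_cyc V y <-> in_cyc W y.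
Proof.
split=> [cycVy | [yW cycWy]].
  have yW := in_cyc_hyperplane_mem cycVy; case: cycVy => _ cycVy.
  split=> // U UW UyW; apply/eqP; rewrite eqn_leq rhoS //=.
  have UxV : U + <[x]> <= V by rewrite subv_add (subv_trans UW WV) -WxV addvSr.
  have := cycVy _ UxV; rewrite -addvA [<[x]> + _]addvC addvA UyW WxV => /(_ erefl).
  by have := rho_addv_line U x; lia.
split; first exact: subvP WV y yW.
move=> U UV UyV; apply/eqP; rewrite eqn_leq rhoS //=.
have eqUW := cycWy _ (capvSr U W) (capv_addv_line UyV WV yW).
have : (rho V <= rho (U + W))%N by rewrite rhoS // -{1}UyV addvS // -memvE.
by have := rho_submod U W; have := rhoS (capvSl U W); lia.
Qed.

Lemma cyc_hyperplane : cyc W = cyc V.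
Proof.
by apply/eqP; rewrite eqEsubv !cyc_least // => y /in_cyc_hyperplane; apply: mem_cyc.
Qed.

End RankDroppingHyperplane.

Lemma cyc_flat X : flat X -> flat (cyc X).
Proof.
move=> flatX x xNcyc; have [xX | xNX] := boolP (x \in X); last first.
  by have := flatX x xNX; have := rho_addv_line_submod x (cyc_subv X); lia.
have [|W [WX WxX ltWX]] := hyperplane_of_notin_cyc xX.
  by move=> /mem_cyc; apply/negP.
have cycW : (cyc X <= W)%VS by rewrite -(cyc_hyperplane WX WxX ltWX) cyc_subv.
by have := rho_addv_line_submod x cycW; rewrite WxX; lia.
Qed.

Lemma rho_cyc_dim V : (rho (cyc V) + \dim V <= rho V + \dim (cyc V))%N.
Proof.
elim: {V}(\dim V).+1 {-2}V (ltnSn (\dim V)) => // n IHn V ltVn.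
have [-> // | neV] := eqVneq (cyc V) V.
have /subvPn[x xV xNcyc] : ~~ (V <= cyc V)%VS.
  by move: neV; rewrite eqEsubv cyc_subv.
have [|W [WV WxV ltWV]] := hyperplane_of_notin_cyc xV.
  by move=> /mem_cyc; apply/negP.
have dimV : (\dim V <= (\dim W).+1)%N by rewrite -WxV dim_addv_line.
have ltW : (\dim W < \dim V)%N.
  rewrite (ltn_leqif (dimv_leqif_eq WV)).
  by apply: contraTneq ltWV => ->; rewrite ltnn.
have := IHn W (leq_trans ltW ltVn); rewrite (cyc_hyperplane WV WxV ltWV).
by have := rho_addv_line W x; rewrite WxV; lia.
Qed.

Lemma cyc_idem V : cyc (cyc V) = cyc V.
Proof.
apply/eqP; rewrite eqEsubv cyc_subv /=.
apply: cyc_least => y cycVy; apply: mem_cyc; split; first exact: mem_cyc.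
move=> W WC WyC; apply/eqP; rewrite eqn_leq rhoS //=.
case: cycVy => _ cycVy; have CV := cyc_subv V; set C := cyc V in WC WyC CV *.
have sub : (W + (V :\: C) <= V)%VS by rewrite subv_add (subv_trans WC CV) diffvSl.
have DC : (V :\: C) + C = V by rewrite -{2}(capv_idPr CV) addv_diff_cap.
have := cycVy _ sub; rewrite -addvA [(V :\: C) + _]addvC addvA WyC addvC DC.
move=> /(_ erefl).
have := rho_addv_dim W (V :\: C).
have := dimv_cap_compl V C; rewrite (capv_idPr CV).
by have := rho_cyc_dim V; rewrite -/C; lia.
Qed.

Lemma in_cyc_rank_eq X Y y : (X <= Y)%VS -> rho X = rho Y ->
  in_cyc X y -> in_cyc Y y.
Proof.
move=> XY eqXY [yX cycXy]; split; first exact: subvP XY y yX.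
move=> W WY WyY; apply/eqP; rewrite eqn_leq rhoS //=.
have := cycXy _ (capvSr W X) (capv_addv_line WyY XY yX).
by have := rhoS (capvSl W X); lia.
Qed.

Lemma cyc_subv_cyc_cl V : (cyc V <= cyc (cl V))%VS.
Proof.
apply: cyc_least => y cycVy; apply: mem_cyc.
exact: in_cyc_rank_eq (subv_cl V) (esym (rho_cl V)) cycVy.
Qed.

Lemma cl_cyc_subv_cyc_cl V : (cl (cyc V) <= cyc (cl V))%VS.
Proof. exact: cl_subv_flat (cyc_subv_cyc_cl V) (cyc_flat (@cl_flat V)). Qed.

Lemma cl_cyclic X : cyclic rho X -> cyclic rho (cl X).
Proof.
move=> cycX; apply/eqP; rewrite eqEsubv cyc_subv /=.
by rewrite -{1}cycX cl_cyc_subv_cyc_cl.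
Qed.

End QMatroidTheory.

Theorem lemma4p1 (F : finFieldType) (E : vectType F)
    (rho : {vspace E} -> nat) :
  qmatroid rho ->
  (forall X : {vspace E}, flat rho X -> flat rho (cyc rho X)) /\
  (forall X : {vspace E}, cyclic rho X -> cyclic rho (cl rho X)) /\
  (forall V : {vspace E},
     (cl rho (cyc rho V) <= cyc rho (cl rho V))%VS /\
     cyclic_flat rho (cl rho (cyc rho V)) /\
     cyclic_flat rho (cyc rho (cl rho V))).
Proof.
move=> rhoM; split; first exact: cyc_flat.
split=> [|V]; first exact: cl_cyclic.
split; first exact: cl_cyc_subv_cyc_cl.
split; split.
- exact: cl_flat.
- exact/cl_cyclic/cyc_idem.
- exact/cyc_flat/cl_flat.
- exact: cyc_idem.
Qed.
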